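(* Let $N\ge2$, $0<\varepsilon<\pi/2$ and $0<\eta<\min\{\pi/4,\varepsilon/2\}$. For $\lambda\in\Sigma_\varepsilon$ and $\xi'\in\tilde\Sigma_\eta^{N-1}$ let $A=\sqrt{\sum_{j=1}^{N-1}\xi_j^2}$, $B=\sqrt{\lambda+A^2}$ (square roots with positive real part), $\tilde A=\sqrt{\sum_{j=1}^{N-1}|\xi_j|^2}$, and $D(A,B)=B^3+AB^2+3A^2B-A^3$. Then there exists a positive constant $c$ such that \[ c(|\lambda|^{1/2}+\tilde A)^3\le|D(A,B)|\qquad(\lambda\in\Sigma_\varepsilon,\ \xi'\in\tilde\Sigma_\eta^{N-1}). \]
   Context: $\Sigma_\varepsilon=\{\lambda\in\mathbb{C}\setminus\{0\}:|\arg\lambda|<\pi-\varepsilon\}$; $\tilde\Sigma_\eta=\{z\in\mathbb{C}\setminus\{0\}:|\arg z|<\eta\}\cup\{z\in\mathbb{C}\setminus\{0\}:\pi-\eta<|\arg z|\}$, and $\tilde\Sigma_\eta^{N-1}$ is its $(N-1)$-fold product. *)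

From Stdlib Require Export Reals.
From Coquelicot Require Export Coquelicot.
Open Scope R_scope.

Definition has_arg (z : C) (theta : R) : Prop :=
  exists r : R, 0 < r /\ z = (r * cos theta, r * sin theta)%R.

Definition in_Sigma (eps : R) (z : C) : Prop :=
  z <> 0%C /\ exists theta, -PI < theta <= PI /\ has_arg z theta /\ Rabs theta < PI - eps.

Definition in_tSigma (eta : R) (z : C) : Prop :=
  z <> 0%C /\ exists theta, -PI < theta <= PI /\ has_arg z theta /\
    (Rabs theta < eta \/ PI - eta < Rabs theta).

Definition is_psqrt (w z : C) : Prop := (w * w)%C = z /\ 0 < Re w.

Definition Dpoly (A B : C) : C :=
  (B * B * B + A * (B * B) + 3 * (A * A) * B - A * A * A)%C.

(** Put [B = A w].  Then [Dpoly A B = A^3 P(w)] with [P(w) = w^3 + w^2 + 3 w - 1].  The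
    hypotheses say that [Re A, Re B >= 0], that [A^2 = sum_j xi_j^2] lies in the closed
    sector [|arg z| <= 2 eta] and that [lambda = B^2 - A^2] lies in the closure of
    [Sigma_eps].  For every root [w] of [P] these constraints force
    [- lambda = A^2 (1 - w^2)] into the sector [|arg z| <= 2 eta < eps], which meets the
    closure of [Sigma_eps] only at [0]; so [Dpoly] vanishes on the closed cone of admissible
    pairs [(A, B)] only at [0].  By compactness [|Dpoly A B| >= c] on the admissible pairs with
    [|A| + |B| = 1], hence [|Dpoly A B| >= c (|A| + |B|)^3] by homogeneity.  Finally
    [|lambda| <= (|A| + |B|)^2] and [sum_j |xi_j|^2 <= sqrt (1 + tan^2 (2 eta)) |A|^2]. *)

From Stdlib Require Import Lia Lra.
From mathcomp Require ssralg ssrnum interval all_classical all_reals all_analysis.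
From mathcomp Require Rstruct Rstruct_topology.

(* For [T >= 0], the closed sector [|arg z| <= atan T] together with [0]. *)
Definition sector (T : R) (z : C) : Prop := Rabs (Im z) <= T * Re z.

(* For [S = tan eps], the closure of [Sigma_eps]. *)
Definition Sigma_closure (S : R) (z : C) : Prop := S * - Re z <= Rabs (Im z).

(* With [T = tan (2 eta)], [S = tan eps] and [lambda = B^2 - A^2], these are the constraints
   that the hypotheses of the theorem impose on [(A, B)]. *)
Definition admissible (T S : R) (A B : C) : Prop :=
  0 <= Re A /\ 0 <= Re B /\ sector T (A * A) /\ Sigma_closure S (B * B - A * A).

Definition cubic (w : C) : C := (w * w * w + w * w + 3 * w - 1)%C.

Lemma cos_sin_Rabs t : Rabs t <= PI -> cos (Rabs t) = cos t /\ sin (Rabs t) = Rabs (sin t).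
Proof.
intros ht. destruct (Rle_or_lt 0 t) as [h|h].
- assert (0 <= sin t) by (apply sin_ge_0; rewrite Rabs_right in ht; lra).
  rewrite (Rabs_right t), (Rabs_right (sin t)) by lra. split; reflexivity.
- rewrite Rabs_left in ht |- * by lra.
  rewrite cos_neg, sin_neg, (Rabs_left1 (sin t)); [split; reflexivity|].
  assert (h' : 0 <= sin (- t)) by (apply sin_ge_0; lra). rewrite sin_neg in h'. lra.
Qed.

Lemma Rabs_sin_le_tan_cos a t : 0 < a < PI / 2 -> Rabs t <= a ->
  Rabs (sin t) <= tan a * cos t.
Proof.
intros ha ht. pose proof PI_RGT_0. pose proof (Rabs_pos t).
destruct (cos_sin_Rabs t ltac:(lra)) as [hc hs].
assert (hca : 0 < cos a) by (apply cos_gt_0; lra).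
assert (h : 0 <= sin (a - Rabs t)) by (apply sin_ge_0; lra).
rewrite sin_minus, hc, hs in h. unfold tan.
apply (Rmult_le_reg_r (cos a)); [lra|].
replace (sin a / cos a * cos t * cos a) with (sin a * cos t) by (field; lra). lra.
Qed.

Lemma tan_mul_opp_cos_le a t : 0 < a < PI / 2 -> Rabs t <= PI - a ->
  tan a * - cos t <= Rabs (sin t).
Proof.
intros ha ht. pose proof PI_RGT_0. pose proof (Rabs_pos t).
destruct (cos_sin_Rabs t ltac:(lra)) as [hc hs].
assert (hca : 0 < cos a) by (apply cos_gt_0; lra).
assert (h : 0 <= sin (a + Rabs t)) by (apply sin_ge_0; lra).
rewrite sin_plus, hc, hs in h. unfold tan.
apply (Rmult_le_reg_r (cos a)); [lra|].
replace (sin a / cos a * - cos t * cos a) with (- (sin a * cos t)) by (field; lra). lra.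
Qed.

Lemma in_Sigma_closure eps z : 0 < eps < PI / 2 -> in_Sigma eps z ->
  Sigma_closure (tan eps) z.
Proof.
intros he [_ [t [_ [[r [hr ->]] ht]]]]. unfold Sigma_closure; simpl.
rewrite Rabs_mult, (Rabs_right r) by lra.
assert (h := tan_mul_opp_cos_le eps t he ltac:(lra)).
replace (tan eps * - (r * cos t)) with (r * (tan eps * - cos t)) by ring.
apply Rmult_le_compat_l; lra.
Qed.

(* If [theta] is an argument of [z], then [2 theta] reduced modulo [2 PI] is an argument of
   [z^2] of modulus at most [2 eta]. *)
Lemma in_tSigma_sq_sector eta z : 0 < eta < PI / 4 -> in_tSigma eta z ->
  sector (tan (2 * eta)) (z * z).
Proof.
intros he [_ [t [ht [[r [hr ->]] hta]]]]. pose proof PI_RGT_0.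
assert (Hphi : exists phi, Rabs phi <= 2 * eta /\ cos phi = cos (2 * t) /\ sin phi = sin (2 * t)).
{ destruct hta as [h|h]; [exists (2 * t)|destruct (Rle_or_lt 0 t) as [h0|h0]].
  - rewrite Rabs_mult, Rabs_right by lra. lra.
  - rewrite Rabs_right in h by lra. exists (2 * t - 2 * PI).
    rewrite cos_minus, sin_minus, cos_2PI, sin_2PI.
    split; [apply Rabs_le; lra | split; ring].
  - rewrite Rabs_left in h by lra. exists (2 * t + 2 * PI).
    rewrite cos_plus, sin_plus, cos_2PI, sin_2PI.
    split; [apply Rabs_le; lra | split; ring]. }
destruct Hphi as [phi [hphi [hc hs]]].
assert (h := Rabs_sin_le_tan_cos (2 * eta) phi ltac:(lra) hphi).
unfold sector; simpl.
replace (r * cos t * (r * sin t) + r * sin t * (r * cos t)) with (r * r * sin (2 * t))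
  by (rewrite sin_2a; ring).
replace (r * cos t * (r * cos t) - r * sin t * (r * sin t)) with (r * r * cos (2 * t))
  by (rewrite cos_2a; ring).
rewrite <- hc, <- hs, Rabs_mult, (Rabs_right (r * r)) by nra.
replace (tan (2 * eta) * (r * r * cos phi)) with (r * r * (tan (2 * eta) * cos phi)) by ring.
apply Rmult_le_compat_l; nra.
Qed.

Lemma sector_scal T k z : 0 <= k -> sector T z -> sector T (RtoC k * z).
Proof.
destruct z as [x y]. unfold sector; simpl. intros hk h.
replace (k * y + 0 * x) with (k * y) by ring.
replace (k * x - 0 * y) with (k * x) by ring.
rewrite Rabs_mult, Rabs_right by lra. nra.
Qed.

Lemma Sigma_closure_scal S k z : 0 <= k -> Sigma_closure S z -> Sigma_closure S (RtoC k * z).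
Proof.
destruct z as [x y]. unfold Sigma_closure; simpl. intros hk h.
replace (k * y + 0 * x) with (k * y) by ring.
replace (k * x - 0 * y) with (k * x) by ring.
rewrite Rabs_mult, Rabs_right by lra. nra.
Qed.

Lemma admissible_scal T S k A B : 0 <= k -> admissible T S A B ->
  admissible T S (RtoC k * A) (RtoC k * B).
Proof.
intros hk [hA [hB [hAA hl]]].
assert (hRe : forall z, Re (RtoC k * z) = k * Re z) by (intros [x y]; simpl; ring).
unfold admissible. rewrite !hRe.
replace (RtoC k * B * (RtoC k * B) - RtoC k * A * (RtoC k * A))%C
  with (RtoC (k * k) * (B * B - A * A))%C by (rewrite RtoC_mult; ring).
replace (RtoC k * A * (RtoC k * A))%C with (RtoC (k * k) * (A * A))%C by (rewrite RtoC_mult; ring).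
assert (0 <= k * k) by nra.
repeat split; [nra | nra | apply sector_scal | apply Sigma_closure_scal]; assumption.
Qed.

Lemma sector_plus T z w : sector T z -> sector T w -> sector T (z + w).
Proof.
destruct z as [x y], w as [u v]. unfold sector; simpl. intros hz hw.
pose proof (Rabs_triang y v). lra.
Qed.

Lemma sector_sum T (f : nat -> C) n m : (n <= m)%nat ->
  (forall j, (n <= j <= m)%nat -> sector T (f j)) -> sector T (sum_n_m f n m).
Proof.
induction m as [|m IH]; intros hnm hf.
- replace n with 0%nat by lia. rewrite sum_n_n. apply hf; lia.
- destruct (Nat.eq_dec n (S m)) as [->|hn].
  + rewrite sum_n_n. apply hf; lia.
  + rewrite sum_n_Sm by lia. apply sector_plus; [apply IH|apply hf]; intros; try apply hf; lia.
Qed.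

Lemma sector_Cmod_le T z : 0 < T -> sector T z -> Cmod z <= sqrt (1 + T ^ 2) * Re z.
Proof.
destruct z as [x y]. unfold sector, Cmod, Re, Im; cbn [fst snd]. intros hT h.
pose proof (Rabs_pos y).
assert (hx : 0 <= x) by nra.
replace (sqrt (1 + T ^ 2) * x) with (sqrt ((1 + T ^ 2) * x ^ 2))
  by (rewrite sqrt_mult, sqrt_pow2 by nra; reflexivity).
apply sqrt_le_1_alt.
assert (hy : Rabs y * Rabs y <= (T * x) * (T * x)) by (apply Rmult_le_compat; lra).
rewrite <- Rabs_mult, Rabs_right in hy by nra. nra.
Qed.

Lemma sum_Cmod_le_Re_sum T (f : nat -> C) n m : 0 < T -> (n <= m)%nat ->
  (forall j, (n <= j <= m)%nat -> sector T (f j)) ->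
  sum_n_m (fun j => Cmod (f j)) n m <= sqrt (1 + T ^ 2) * Re (sum_n_m f n m).
Proof.
intros hT. induction m as [|m IH]; intros hnm hf.
- replace n with 0%nat by lia. rewrite !sum_n_n. apply sector_Cmod_le; [exact hT | apply hf; lia].
- destruct (Nat.eq_dec n (S m)) as [->|hn].
  + rewrite !sum_n_n. apply sector_Cmod_le; [exact hT | apply hf; lia].
  + rewrite !sum_n_Sm by lia.
    assert (h1 := IH ltac:(lia) ltac:(intros; apply hf; lia)).
    assert (h2 := sector_Cmod_le _ _ hT (hf (S m) ltac:(lia))).
    change (sum_n_m (fun j => Cmod (f j)) n m + Cmod (f (S m))
      <= sqrt (1 + T ^ 2) * (Re (sum_n_m f n m) + Re (f (S m)))). lra.
Qed.

Lemma sector_Sigma_closure_eq0 T S z : 0 < T < S ->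
  sector T (- z) -> Sigma_closure S z -> z = 0%C.
Proof.
destruct z as [x y]. unfold sector, Sigma_closure; simpl. rewrite Rabs_Ropp.
intros hTS hT hS. pose proof (Rabs_pos y).
assert (hx : x = 0) by nra. subst x.
assert (hy : Rabs y = 0) by lra. apply Rabs_eq_0 in hy. subst y. reflexivity.
Qed.

Lemma Rabs_le_Cmod_add (z w : C) :
  Rabs (Re z) <= Cmod z + Cmod w /\ Rabs (Im z) <= Cmod z + Cmod w.
Proof.
pose proof (Rmax_Cmod z). pose proof (Cmod_ge_0 w).
pose proof (Rmax_l (Rabs (fst z)) (Rabs (snd z))). pose proof (Rmax_r (Rabs (fst z)) (Rabs (snd z))).
unfold Re, Im. split; lra.
Qed.

Lemma sqrt_Cmod_sub_sq_le (A B : C) : sqrt (Cmod (B * B - A * A)) <= Cmod A + Cmod B.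
Proof.
pose proof (Cmod_ge_0 A). pose proof (Cmod_ge_0 B).
rewrite <- (sqrt_pow2 (Cmod A + Cmod B)) by lra. apply sqrt_le_1_alt.
unfold Cminus. eapply Rle_trans; [apply Cmod_triangle|].
rewrite Cmod_opp, !Cmod_mult. nra.
Qed.

Lemma sqrt_sum_Cmod_sq_le T (xi : nat -> C) n m A : 0 < T -> (n <= m)%nat ->
  (forall j, (n <= j <= m)%nat -> sector T (xi j * xi j)) ->
  (A * A)%C = sum_n_m (fun j => xi j * xi j)%C n m ->
  sqrt (sum_n_m (fun j => Cmod (xi j) ^ 2) n m) <= sqrt (sqrt (1 + T ^ 2)) * Cmod A.
Proof.
intros hT hnm hxi hA.
rewrite (sum_n_m_ext _ (fun j => Cmod (xi j * xi j)%C))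
  by (intros j; rewrite Cmod_mult; simpl; rewrite Rmult_1_r; reflexivity).
rewrite <- (sqrt_pow2 (Cmod A)), <- sqrt_mult by (try apply pow2_ge_0; apply Cmod_ge_0 || apply sqrt_pos).
apply sqrt_le_1_alt. eapply Rle_trans; [apply (sum_Cmod_le_Re_sum T); assumption|].
rewrite <- hA. apply Rmult_le_compat_l; [apply sqrt_pos|].
eapply Rle_trans; [apply Rle_abs|]. eapply Rle_trans; [apply re_le_Cmod|].
rewrite Cmod_mult. simpl. lra.
Qed.

Lemma Dpoly_scal k A B : Dpoly (k * A) (k * B) = (k * k * k * Dpoly A B)%C.
Proof. unfold Dpoly. ring. Qed.

Lemma Dpoly_0_l B : Dpoly 0 B = (B * B * B)%C.
Proof. unfold Dpoly. ring. Qed.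

Lemma Dpoly_mul_r A w : Dpoly A (A * w) = (A * A * A * cubic w)%C.
Proof. unfold Dpoly, cubic. ring. Qed.

Lemma cubic_root_cases x y : cubic (x, y) = 0%C ->
  (y = 0 /\ -1 < x < 1) \/ (y * y = 3 * x * x + 2 * x + 3 /\ -1 < x < 0).
Proof.
intros h.
assert (hre : x * x * x - 3 * x * (y * y) + x * x - y * y + 3 * x - 1 = 0).
{ apply (f_equal Re) in h. unfold cubic in h. simpl in h. rewrite <- h. ring. }
assert (him : y * (3 * x * x - y * y + 2 * x + 3) = 0).
{ apply (f_equal Im) in h. unfold cubic in h. simpl in h. rewrite <- h. ring. }
apply Rmult_integral in him. destruct him as [->|hy].
- left. split; [reflexivity|]. split; nra.
- right. split; [lra|]. assert (2 * x * x * x + 2 * x * x + 2 * x + 1 = 0) by nra.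
  split; nra.
Qed.

(* In coordinates [A = a + i b] and [w = x + i y], a root of [cubic] with [y > 0]: the two
   sides are [|Im|] and [T Re] of [A^2 (1 - w^2)]. *)
Lemma complex_root_sector T a b x y : 0 < T -> 0 <= a ->
  Rabs (2 * a * b) <= T * (a * a - b * b) -> 0 <= a * x - b * y ->
  0 < y -> y * y = 3 * x * x + 2 * x + 3 -> -1 < x < 0 ->
  Rabs (2 * a * b * (1 - x * x + y * y) - (a * a - b * b) * (2 * x * y))
    <= T * ((a * a - b * b) * (1 - x * x + y * y) + 2 * a * b * (2 * x * y)).
Proof.
intros hT ha hA hB hy hy2 hx.
set (s1 := a * a - b * b) in *. set (s2 := 2 * a * b) in *.
set (u := 1 - x * x + y * y). set (V := 2 * x * y).
pose proof (Rabs_pos s2).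
destruct (Req_dec s1 0) as [h1|h1].
{ assert (hs2 : s2 = 0) by (apply Rabs_eq_0; rewrite h1 in hA; lra).
  assert (a = 0 /\ b = 0) as [-> ->].
  { unfold s1, s2 in *. destruct (Rmult_integral (2 * a) b hs2); split; nra. }
  unfold s1, s2. replace (2 * 0 * 0 * u - (0 * 0 - 0 * 0) * V) with 0 by ring.
  rewrite Rabs_R0. nra. }
assert (hs1 : 0 < s1) by nra.
assert (hu : y * y <= u) by (unfold u; nra).
assert (hV : V < 0) by (unfold V; nra).
assert (ha' : 0 < a) by (unfold s1 in hs1; nra).
assert (hb : b * y < 0) by nra.
assert (hb' : b < 0) by nra.
assert (hs2 : s2 < 0).
{ assert (0 < a * - b) by (apply Rmult_lt_0_compat; lra). unfold s2. lra. }
assert (hIm : 0 <= s1 * V - s2 * u).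
{ assert (h0 : (- x) * y * s1 <= (- x) * y * (a * a)).
  { assert (0 <= (- x) * y * (b * b)) by (apply Rmult_le_pos; nra). unfold s1. lra. }
  assert (h1' : (- x) * y * (a * a) <= a * (- b) * (y * y)).
  { assert (a * (- x) <= (- b) * y) by lra. assert (0 <= a * y) by nra. nra. }
  assert (h2' : a * (- b) * (y * y) <= a * (- b) * u).
  { apply Rmult_le_compat_l; [apply Rmult_le_pos|]; lra. }
  unfold s2, V. lra. }
rewrite Rabs_left1 by lra.
(* [(s1 V - s2 u) s1 + s2 (s1 u + s2 V) = V (s1^2 + s2^2) <= 0]. *)
assert (hcross : (s1 * V - s2 * u) * s1 <= - s2 * (s1 * u + s2 * V)).
{ assert (0 <= - V * (s1 * s1 + s2 * s2)) by (apply Rmult_le_pos; nra). lra. }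
assert (hP : 0 <= s1 * u + s2 * V) by nra.
assert (hs2T : - s2 * (s1 * u + s2 * V) <= T * s1 * (s1 * u + s2 * V)).
{ apply Rmult_le_compat_r; [exact hP|]. rewrite Rabs_left in hA by lra. lra. }
apply (Rmult_le_reg_r s1); [exact hs1|]. lra.
Qed.

Lemma cubic_root_sector T A w : 0 < T -> 0 <= Re A -> sector T (A * A) ->
  0 <= Re (A * w) -> cubic w = 0%C -> sector T (A * A * (1 - w * w)).
Proof.
destruct A as [a b], w as [x y]. intros hT ha hA hB hw.
destruct (cubic_root_cases x y hw) as [[-> hx]|[hy2 hx]].
- replace ((a, b) * (a, b) * (1 - (x, 0) * (x, 0)))%C with (RtoC (1 - x * x) * ((a, b) * (a, b)))%C.
  + apply sector_scal; [nra|exact hA].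
  + apply injective_projections; simpl; ring.
- unfold sector, Re, Im in *. simpl in *.
  replace (a * b + b * a) with (2 * a * b) in hA by ring.
  replace ((a * a - b * b) * (1 + - (x * x - y * y)) - (a * b + b * a) * (0 + - (x * y + y * x)))
    with ((a * a - b * b) * (1 - x * x + y * y) + 2 * a * b * (2 * x * y)) by ring.
  destruct (Rtotal_order 0 y) as [hy|[hy|hy]]; [|nra|].
  + replace ((a * a - b * b) * (0 + - (x * y + y * x)) + (a * b + b * a) * (1 + - (x * x - y * y)))
      with (2 * a * b * (1 - x * x + y * y) - (a * a - b * b) * (2 * x * y)) by ring.
    apply complex_root_sector; lra.
  + (* Conjugating [A] and [w] reduces the case [y < 0] to [y > 0]. *)
    replace ((a * a - b * b) * (0 + - (x * y + y * x)) + (a * b + b * a) * (1 + - (x * x - y * y)))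
      with (- (2 * a * (- b) * (1 - x * x + (- y) * (- y)) - (a * a - (- b) * (- b)) * (2 * x * (- y))))
      by ring.
    rewrite Rabs_Ropp.
    replace ((a * a - b * b) * (1 - x * x + y * y) + 2 * a * b * (2 * x * y))
      with ((a * a - (- b) * (- b)) * (1 - x * x + (- y) * (- y)) + 2 * a * (- b) * (2 * x * (- y)))
      by ring.
    apply complex_root_sector; try lra.
    replace (2 * a * - b) with (- (2 * a * b)) by ring. rewrite Rabs_Ropp. lra.
Qed.

Lemma cubic_neq0_of_sq1 w : (w * w = 1)%C -> cubic w <> 0%C.
Proof.
intros hw2 hw.
assert (hw0 : w = 0%C).
{ replace w with (/ 4 * cubic w)%C; [rewrite hw; ring|].
  unfold cubic. replace (w * w * w)%C with (w * (w * w))%C by ring. rewrite hw2. field. }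
rewrite hw0, Cmult_0_l in hw2. apply (f_equal Re) in hw2. simpl in hw2. lra.
Qed.

Lemma Dpoly_eq0 T S A B : 0 < T < S -> admissible T S A B -> Dpoly A B = 0%C ->
  A = 0%C /\ B = 0%C.
Proof.
intros hTS [hA [hB [hAA hlam]]] hD.
destruct (Req_dec (Cmod A) 0) as [h0|h0].
- apply Cmod_eq_0 in h0. subst A. split; [reflexivity|].
  rewrite Dpoly_0_l in hD. apply (f_equal Cmod) in hD.
  rewrite !Cmod_mult, Cmod_0 in hD. apply Cmod_eq_0.
  destruct (Rmult_integral _ _ hD) as [h|h]; [destruct (Rmult_integral _ _ h)|]; assumption.
- exfalso. assert (hA0 : A <> 0%C) by (intros ->; rewrite Cmod_0 in h0; lra).
  set (w := (B / A)%C).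
  assert (hBw : B = (A * w)%C) by (unfold w; field; exact hA0).
  rewrite hBw, Dpoly_mul_r in hD. rewrite hBw in hB, hlam.
  assert (hw : cubic w = 0%C).
  { replace (cubic w) with (/ A * / A * / A * (A * A * A * cubic w))%C by (field; exact hA0).
    rewrite hD. ring. }
  assert (hsec := cubic_root_sector T A w ltac:(lra) hA hAA hB hw).
  assert (hlam0 : (A * w * (A * w) - A * A)%C = 0%C).
  { apply (sector_Sigma_closure_eq0 T S); [exact hTS| |exact hlam].
    replace (- (A * w * (A * w) - A * A))%C with (A * A * (1 - w * w))%C by ring. exact hsec. }
  apply (cubic_neq0_of_sq1 w); [|exact hw].
  replace (w * w)%C with (1 + / A * / A * (A * w * (A * w) - A * A))%C by (field; exact hA0).
  rewrite hlam0. ring.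
Qed.

Module Compactness.
Import ssralg ssrnum interval all_classical all_reals all_analysis Rstruct Rstruct_topology.
Import ssreflect ssrbool ssrfun Num.Theory.
Import numFieldNormedType.Exports.
Local Open Scope classical_set_scope.

(* Stdlib's [Rplus], [Rmult], ... agree with the ring operations of the [realType] [R] only
   up to conversion, so the continuity lemmas are restated for them. *)
Section RealContinuity.
Context {X : topologicalType} (x : X).
Implicit Types f g : X -> R.

Lemma continuous_Rplus f g : continuous_at x f -> continuous_at x g ->
  continuous_at x (fun y => Rplus (f y) (g y)).
Proof. exact: (@continuousD _ R^o). Qed.

Lemma continuous_Rmult f g : continuous_at x f -> continuous_at x g ->
  continuous_at x (fun y => Rmult (f y) (g y)).
Proof. exact: (@continuousM R). Qed.

Lemma continuous_Ropp f : continuous_at x f -> continuous_at x (fun y => Ropp (f y)).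
Proof. exact: (@continuousN _ R^o). Qed.

Lemma continuous_Rminus f g : continuous_at x f -> continuous_at x g ->
  continuous_at x (fun y => Rminus (f y) (g y)).
Proof. by move=> cf cg; apply: continuous_Rplus => //; apply: continuous_Ropp. Qed.

Lemma continuous_Rabs f : continuous_at x f -> continuous_at x (fun y => Rabs (f y)).
Proof. by move=> cf; apply: continuous_comp cf _; exact: (@norm_continuous _ R^o). Qed.

Lemma continuous_sqrt f : continuous_at x f -> continuous_at x (fun y => sqrt (f y)).
Proof.
move=> cf; rewrite (_ : (fun y => sqrt (f y)) = (fun y => Num.sqrt (f y))).
  by apply: continuous_comp cf _; exact: sqrt_continuous.
by apply: funext => y; rewrite RsqrtE.
Qed.

Lemma continuous_fst {U V : topologicalType} (f : X -> U * V) :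
  continuous_at x f -> continuous_at x (fun y => (f y).1).
Proof. by move=> cf; apply: continuous_comp cf _; exact: cvg_fst. Qed.

Lemma continuous_snd {U V : topologicalType} (f : X -> U * V) :
  continuous_at x f -> continuous_at x (fun y => (f y).2).
Proof. by move=> cf; apply: continuous_comp cf _; exact: cvg_snd. Qed.

End RealContinuity.

Ltac real_continuity :=
  move=> ?; repeat match goal with
  | |- continuous_at _ (fun _ => ?c) => exact: cvg_cst
  | |- continuous_at _ (fun y => y) => exact: cvg_id
  | |- continuous_at _ fst => exact: cvg_fst
  | |- continuous_at _ snd => exact: cvg_snd
  | |- continuous_at _ (fun y => Rplus _ _) => apply: continuous_Rplus
  | |- continuous_at _ (fun y => Rminus _ _) => apply: continuous_Rminus
  | |- continuous_at _ (fun y => Rmult _ _) => apply: continuous_Rmult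
  | |- continuous_at _ (fun y => Ropp _) => apply: continuous_Ropp
  | |- continuous_at _ (fun y => Rabs _) => apply: continuous_Rabs
  | |- continuous_at _ (fun y => sqrt _) => apply: continuous_sqrt
  | |- continuous_at _ (fun y => fst _) => apply: continuous_fst
  | |- continuous_at _ (fun y => snd _) => apply: continuous_snd
  end.

Section Closedness.
Local Open Scope ring_scope.

Lemma closed_Rle {X : topologicalType} (f g : X -> R) :
  continuous f -> continuous g -> closed [set x | Rle (f x) (g x)].
Proof.
move=> cf cg.
have -> : [set x | Rle (f x) (g x)] = (fun x => Rminus (g x) (f x)) @^-1` [set y | 0 <= y].
  by apply/seteqP; split=> x /=; rewrite RminusE subr_ge0 => /RleP.
apply: preimage_closed; last exact: closed_ge.
by move=> x _; exact: continuous_Rminus (cg x) (cf x).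
Qed.

Lemma closed_Req {X : topologicalType} (f : X -> R) (c : R) :
  continuous f -> closed [set x | f x = c].
Proof.
move=> cf; apply: (@preimage_closed _ _ f [set y | y = c]); last exact: closed_eq.
by move=> x _; exact: cf.
Qed.

Lemma compact_pos_lower_bound {X : topologicalType} {K : realType} (A : set X) (f : X -> K) :
  compact A -> {within A, continuous f} -> (forall x, A x -> 0 < f x) ->
  exists2 m, 0 < m & forall x, A x -> m <= f x.
Proof.
move=> cA cf fpos; have [[x0 Ax0]|A0] := pselect (A !=set0); last first.
  by exists 1 => // x Ax; case: A0; exists x.
have [c Ac cmin] := compact_EVT_min (ex_intro _ x0 Ax0) cA cf.
exists (f c); [exact: fpos (set_mem Ac) | move=> x Ax; exact: cmin (mem_set Ax)].
Qed.

End Closedness.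

Definition admissible_sphere (T S : R) : set ((R * R) * (R * R)) :=
  [set x | admissible T S x.1 x.2 /\ Cmod x.1 + Cmod x.2 = 1].

Lemma admissible_sphere_closed T S : closed (admissible_sphere T S).
Proof.
apply: closedI; last by apply: closed_Req; rewrite /Cmod /=; real_continuity.
repeat apply: closedI; apply: closed_Rle;
  rewrite /Complex.Re /Complex.Im /Cmult /Cminus /Cplus /Copp /=; real_continuity.
Qed.

Section Box.
Local Open Scope ring_scope.

Lemma Rabs_le1_itv (u : R) : (Rabs u <= 1)%coqR -> `[-1, 1]%classic u.
Proof. by move=> /RleP; rewrite /= in_itv /= -ler_norml. Qed.

Lemma admissible_sphere_compact T S : compact (admissible_sphere T S).
Proof.
have seg := @segment_compact R (-1) 1.
apply: (subclosed_compact (admissible_sphere_closed T S)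
  (compact_setX (compact_setX seg seg) (compact_setX seg seg))).
move=> [[a b] [p q]] [_ /= hn].
have [ha hb] := Rabs_le_Cmod_add (a, b) (p, q).
have [hp hq] := Rabs_le_Cmod_add (p, q) (a, b).
rewrite Rplus_comm hn in hp hq; rewrite hn in ha hb.
by do !split; apply: Rabs_le1_itv.
Qed.

End Box.

Lemma Dpoly_sphere_lower_bound T S : (0 < T < S)%coqR ->
  exists m, (0 < m)%coqR /\ forall A B, admissible T S A B ->
    (Cmod A + Cmod B = 1)%coqR -> (m <= Cmod (Dpoly A B))%coqR.
Proof.
move=> hTS.
have [||m /RltP m0 hm] := @compact_pos_lower_bound _ R (admissible_sphere T S)
  (fun x => Cmod (Dpoly x.1 x.2)) (admissible_sphere_compact T S).
- by apply: continuous_subspaceT; rewrite /Cmod /Dpoly /=; real_continuity.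
- move=> [A B] [hadm hn]; apply/RltP/Cmod_gt_0 => hD.
  have [hA0 hB0] := Dpoly_eq0 T S A B hTS hadm hD.
  by move: hn; rewrite hA0 hB0 Cmod_0; lra.
- by exists m; split=> // A B hadm hn; apply/RleP; exact: (hm (A, B)).
Qed.

End Compactness.

Lemma Dpoly_lower_bound T S : 0 < T < S ->
  exists c, 0 < c /\ forall A B, admissible T S A B ->
    c * (Cmod A + Cmod B) ^ 3 <= Cmod (Dpoly A B).
Proof.
intros hTS. destruct (Compactness.Dpoly_sphere_lower_bound T S hTS) as [m [hm hsphere]].
exists m. split; [exact hm|]. intros A B hadm.
pose proof (Cmod_ge_0 A). pose proof (Cmod_ge_0 B). pose proof (Cmod_ge_0 (Dpoly A B)).
set (r := Cmod A + Cmod B).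
destruct (Req_dec r 0) as [h0|h0].
{ rewrite h0. simpl. lra. }
assert (hr : 0 < r) by (unfold r in *; lra).
assert (hr' : 0 <= / r) by (apply Rlt_le, Rinv_0_lt_compat; exact hr).
assert (h : m <= Cmod (Dpoly (RtoC (/ r) * A) (RtoC (/ r) * B))).
{ apply hsphere; [apply admissible_scal; assumption|].
  rewrite !Cmod_mult, Cmod_R, Rabs_right, <- Rmult_plus_distr_l by lra. fold r. field. lra. }
rewrite Dpoly_scal, !Cmod_mult, Cmod_R, Rabs_right in h by lra.
replace (Cmod (Dpoly A B)) with (r ^ 3 * (/ r * / r * / r * Cmod (Dpoly A B))) by (field; lra).
rewrite Rmult_comm. apply Rmult_le_compat_l; [apply pow_le; lra | exact h].
Qed.

Lemma div_pow3_mul_le c K x y : 0 < c -> 1 <= K -> 0 <= x <= K * y ->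
  c / K ^ 3 * x ^ 3 <= c * y ^ 3.
Proof.
intros hc hK hx.
apply Rle_trans with (c / K ^ 3 * (K * y) ^ 3).
- apply Rmult_le_compat_l; [apply Rlt_le, Rdiv_lt_0_compat; [lra | apply pow_lt; lra]|].
  apply pow_incr. exact hx.
- right. field. lra.
Qed.

Theorem lemma6p3 (N : nat) (eps eta : R) :
  (2 <= N)%nat ->
  0 < eps < PI / 2 ->
  0 < eta < Rmin (PI / 4) (eps / 2) ->
  exists c : R, 0 < c /\
    forall (lam : C) (xi : nat -> C) (A B : C),
      in_Sigma eps lam ->
      (forall j, (1 <= j <= N - 1)%nat -> in_tSigma eta (xi j)) ->
      is_psqrt A (sum_n_m (fun j => (xi j * xi j)%C) 1 (N - 1)) ->
      is_psqrt B (lam + A * A)%C ->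
      c * (sqrt (Cmod lam)
           + sqrt (sum_n_m (fun j => (Cmod (xi j))^2) 1 (N - 1)))^3
        <= Cmod (Dpoly A B).
Proof.
intros hN he hh. pose proof PI_RGT_0.
pose proof (Rmin_l (PI / 4) (eps / 2)). pose proof (Rmin_r (PI / 4) (eps / 2)).
set (T := tan (2 * eta)). set (S := tan eps).
assert (hTS : 0 < T < S) by (split; [apply tan_gt_0 | apply tan_increasing]; lra).
destruct (Dpoly_lower_bound T S hTS) as [c [hc hD]].
set (K := 1 + sqrt (sqrt (1 + T ^ 2))).
assert (hK : 1 <= K) by (pose proof (sqrt_pos (sqrt (1 + T ^ 2))); unfold K; lra).
exists (c / K ^ 3). split; [apply Rdiv_lt_0_compat; [lra | apply pow_lt; lra]|].
intros lam xi A B hlam hxi [hA hA0] [hB hB0].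
assert (hlamAB : lam = (B * B - A * A)%C) by (rewrite hB; ring).
assert (hsq : forall j, (1 <= j <= N - 1)%nat -> sector T (xi j * xi j))
  by (intros; apply in_tSigma_sq_sector; [lra | auto]).
assert (hadm : admissible T S A B).
{ repeat split; try lra.
  - rewrite hA. apply sector_sum; [lia | exact hsq].
  - rewrite <- hlamAB. apply in_Sigma_closure; [lra | exact hlam]. }
apply Rle_trans with (c * (Cmod A + Cmod B) ^ 3); [|exact (hD A B hadm)].
apply div_pow3_mul_le; [exact hc | exact hK|].
pose proof (sqrt_Cmod_sub_sq_le A B) as hl. rewrite <- hlamAB in hl.
pose proof (sqrt_sum_Cmod_sq_le T xi 1 (N - 1) A ltac:(lra) ltac:(lia) hsq hA).
pose proof (Cmod_ge_0 A). pose proof (Cmod_ge_0 B). pose proof (sqrt_pos (Cmod lam)).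
pose proof (sqrt_pos (sum_n_m (fun j => Cmod (xi j) ^ 2) 1 (N - 1))).
pose proof (sqrt_pos (sqrt (1 + T ^ 2))).
unfold K. split; nra.
Qed.
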